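(* A family of structures $\mathfrak{K}$ is $\mathbf{co}$-learnable if and only if $\mathfrak{K}$ is a $\Sigma^{\mathrm{inf}}_1$-antichain, i.e., for any two distinct $\mathcal{A},\mathcal{B}\in\mathfrak{K}$ there are $\Sigma^{\mathrm{inf}}_1$ sentences $\varphi,\psi$ with $\mathcal{A}\models\varphi$, $\mathcal{B}\not\models\varphi$, $\mathcal{B}\models\psi$, $\mathcal{A}\not\models\psi$ (equivalently, the $\Sigma^{\mathrm{inf}}_1$-theories of members of $\mathfrak{K}$ are pairwise $\subseteq$-incomparable).
   Context: All structures are countable, have domain $\mathbb{N}$, are in a finite relational signature, and are identified with their atomic diagrams. A family of structures $\mathfrak{K}$ is a countable set of pairwise nonisomorphic such structures. For a structure $\mathcal{S}$ and $s\in\mathbb{N}$, $\mathcal{S}\restriction_s$ denotes the finite substructure with domain $\{0,\dots,s\}$. $\mathrm{LD}(\mathfrak{K})$ is the set of all structures with domain $\mathbb{N}$ isomorphic to some member of $\mathfrak{K}$. The hypothesis space is $\{\ulcorner\mathcal{A}\urcorner:\mathcal{A}\in\mathfrak{K}\}\cup\{?\}$ (pairwise distinct formal symbols); a learner is an arbitrary function $\mathbf{M}$ from $\{\mathcal{S}\restriction_s:\mathcal{S}\in\mathrm{LD}(\mathfrak{K}),s\in\mathbb{N}\}$ to the hypothesis space. $\mathfrak{K}$ is $\mathbf{co}$-learnable if there is a learner $\mathbf{M}$ such that for every $\mathcal{S}\in\mathrm{LD}(\mathfrak{K})$, $\{\mathbf{M}(\mathcal{S}\restriction_s):s\in\mathbb{N}\}\setminus\{?\}=\{\ulcorner\mathcal{B}\urcorner:\mathcal{B}\in\mathfrak{K},\mathcal{B}\neq\mathcal{A}\}$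 where $\mathcal{A}\in\mathfrak{K}$ is isomorphic to $\mathcal{S}$ (i.e., the only conjecture never output is the correct one). The $\Sigma^{\mathrm{inf}}_n$-theory of $\mathcal{A}$ is the set of $\Sigma^{\mathrm{inf}}_n$ sentences true in $\mathcal{A}$. Infinitary logic: $\Sigma^{\mathrm{inf}}_0=\Pi^{\mathrm{inf}}_0$ formulas are finitary quantifier-free formulas; a $\Sigma^{\mathrm{inf}}_\alpha$ formula is a countable disjunction $\bigvee_{i}\exists\bar y_i\,\psi_i$ with each $\psi_i\in\Pi^{\mathrm{inf}}_{\beta_i}$, $\beta_i<\alpha$; a $\Pi^{\mathrm{inf}}_\alpha$ formula is a countable conjunction $\bigwedge_i\forall\bar y_i\,\psi_i$ with each $\psi_i\in\Sigma^{\mathrm{inf}}_{\beta_i}$, $\beta_i<\alpha$ (free variables among a fixed finite tuple). *)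

From mathcomp Require Import all_boot.
Set Implicit Arguments. Unset Strict Implicit. Unset Printing Implicit Defensive.

(* A finite relational signature: the list of arities of its relation symbols;
   relation symbols are the indices 'I_(size sig). *)
Definition arity (sig : seq nat) (r : 'I_(size sig)) : nat := nth 0 sig r.

(* A structure with domain nat, identified with its atomic diagram:
   for each relation symbol r, which arity-tuples of naturals satisfy r. *)
Definition structure (sig : seq nat) :=
  forall r : 'I_(size sig), (arity r).-tuple nat -> bool.

Definition iso (sig : seq nat) (A B : structure sig) : Prop :=
  exists f : nat -> nat, bijective f /\
    forall (r : 'I_(size sig)) (t : (arity r).-tuple nat),
      A r t = B r (map_tuple f t).

Definition agree_upto (sig : seq nat) (s : nat) (A B : structure sig) : Prop :=
  forall (r : 'I_(size sig)) (t : (arity r).-tuple nat),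
    all (fun x => x <= s) t -> A r t = B r t.

Definition pairwise_noniso (sig : seq nat) (I : Type) (K : I -> structure sig) :=
  forall i j : I, iso (K i) (K j) -> i = j.

Definition LD (sig : seq nat) (I : Type) (K : I -> structure sig)
  (S : structure sig) : Prop := exists i, iso S (K i).

(* A learner: a function on the finite restrictions S|_s, S in LD(K), with values in
   the hypothesis space option I (None = '?', Some i = the name of K i).
   It is encoded as M : nat -> structure sig -> option I which only depends
   on S|_s (for S in LD(K)). *)
Definition learner (sig : seq nat) (I : Type) (K : I -> structure sig)
  (M : nat -> structure sig -> option I) : Prop :=
  forall (s : nat) (S S' : structure sig),
    LD K S -> LD K S' -> agree_upto s S S' -> M s S = M s S'.

Definition co_learnable (sig : seq nat) (I : Type) (K : I -> structure sig) : Prop :=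
  exists M : nat -> structure sig -> option I, learner K M /\
    forall (S : structure sig) (i : I), iso S (K i) ->
      forall j : I, (exists s, M s S = Some j) <-> j <> i.

Inductive qf (sig : seq nat) : Type :=
  | QTrue | QFalse
  | QEq of nat & nat
  | QRel (r : 'I_(size sig)) of (arity r).-tuple nat
  | QNot of qf sig
  | QAnd of qf sig & qf sig
  | QOr of qf sig & qf sig.

Fixpoint qf_eval (sig : seq nat) (A : structure sig) (v : nat -> nat) (f : qf sig)
  : bool :=
  match f with
  | QTrue => true
  | QFalse => false
  | QEq x y => v x == v y
  | QRel r xs => A r (map_tuple v xs)
  | QNot g => ~~ qf_eval A v g
  | QAnd g h => qf_eval A v g && qf_eval A v h
  | QOr g h => qf_eval A v g || qf_eval A v h
  end.

(* A Sigma^inf_1 sentence: a countable disjunction \/_k (exists y_k, psi_k) with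
   psi_k quantifier-free and all (finitely many) variables of psi_k bound by
   the existential block y_k. The countable index set is nat (a finite or empty
   disjunction is obtained by repetition / the disjunct QFalse). *)
Record sigma1_sentence (sig : seq nat) := Sigma1 { s1_disj : nat -> qf sig }.

Definition sat1 (sig : seq nat) (A : structure sig) (phi : sigma1_sentence sig) : Prop :=
  exists (k : nat) (v : nat -> nat), qf_eval A v (s1_disj phi k).

Definition sigma1_antichain (sig : seq nat) (I : Type) (K : I -> structure sig) : Prop :=
  forall i j : I, i <> j ->
    exists phi psi : sigma1_sentence sig,
      [/\ sat1 (K i) phi, ~ sat1 (K j) phi, sat1 (K j) psi & ~ sat1 (K i) psi].

(* A co-learner for a Sigma^inf_1-antichain enumerates, at stage s, one
   candidate j (read off s) and rejects it as soon as the finite part S|_s of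
   the input already satisfies a disjunct of a Sigma^inf_1 sentence that fails
   in K j; the antichain property guarantees that every wrong candidate is
   eventually rejected, and no quantifier-free fact true in S can fail in the
   correct structure. Conversely, if a co-learner rejects j on K i at stage s,
   then the atomic diagram of K i restricted to {0,...,s} (an existential
   sentence true in K i) cannot hold in K j: otherwise a copy of K j agreeing
   with K i up to s would be rejected as j as well. *)

From mathcomp Require Import all_boot.
From Stdlib Require Import ClassicalEpsilon.

Lemma map_tuple_comp n (f g : nat -> nat) (t : n.-tuple nat) :
  map_tuple f (map_tuple g t) = map_tuple (f \o g) t.
Proof. by apply: val_inj; rewrite /= map_comp. Qed.

Lemma eq_in_map_tuple n (f g : nat -> nat) (t : n.-tuple nat) :
  {in t, f =1 g} -> map_tuple f t = map_tuple g t.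
Proof. by move=> fg; apply: val_inj; apply/eq_in_map. Qed.

Lemma iso_refl {sig : seq nat} (A : structure sig) : iso A A.
Proof.
exists id; split; first by exists id.
by move=> r t; congr (A r); apply: val_inj; rewrite /= map_id.
Qed.

Lemma bij_extend_inj_on {n} {v : nat -> nat} :
  {in gtn n &, injective v} ->
  exists2 f, bijective f & {in gtn n, f =1 v}.
Proof.
elim: n => [|n IHn] v_inj; first by exists id => //; exists id.
have [f f_bij fE] : exists2 f, bijective f & {in gtn n, f =1 v}.
  by apply: IHn => x y xn yn; apply: v_inj; apply: ltnW.
pose swap y := if y == f n then v n else if y == v n then f n else y.
have swap_bij : bijective swap.
  apply: inv_bij => y; rewrite /swap.
  case: (eqVneq y (f n)) => [->|y_fn]; first by rewrite eqxx; case: eqP.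
  by case: (eqVneq y (v n)) => [->|y_vn]; rewrite ?eqxx ?(negbTE y_fn) ?(negbTE y_vn).
exists (swap \o f); first exact: bij_comp.
move=> x; rewrite inE ltnS leq_eqVlt => /orP[/eqP->|xn]; first by rewrite /= /swap eqxx.
have vx_fn : v x != f n.
  by apply/eqP; rewrite -fE // => /(bij_inj f_bij) xE; rewrite xE ltnn in xn.
have vx_vn : v x != v n.
  apply/eqP => /(v_inj x n); rewrite !inE ltnS leqnn (ltnW xn) => /(_ isT isT) xE.
  by rewrite xE ltnn in xn.
by rewrite /= /swap fE // (negbTE vx_fn) (negbTE vx_vn).
Qed.

Section QuantifierFree.
Context {sig : seq nat}.
Implicit Types (A B : structure sig) (g : qf sig).

Lemma eq_qf_eval A v w g : v =1 w -> qf_eval A v g = qf_eval A w g.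
Proof.
move=> vw; elim: g => [||x y|r xs|g IH|g IHg h IHh|g IHg h IHh] /=;
  rewrite ?IH ?IHg ?IHh ?vw //.
by rewrite (@eq_in_map_tuple _ v w).
Qed.

Lemma qf_eval_transport {A B f} v g :
  injective f -> (forall r t, A r t = B r (map_tuple f t)) ->
  qf_eval A v g = qf_eval B (f \o v) g.
Proof.
move=> f_inj AB; elim: g => [||x y|r xs|g IH|g IHg h IHh|g IHg h IHh] /=;
  rewrite ?IH ?IHg ?IHh ?(inj_eq f_inj) //.
by rewrite AB map_tuple_comp.
Qed.

Lemma iso_qf_sat {A B} g :
  iso A B -> (exists v, qf_eval A v g) <-> (exists v, qf_eval B v g).
Proof.
case=> f [[f' fK f'K] AB]; have f_inj := can_inj fK.
split=> [[v Av]|[v Bv]].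
  by exists (f \o v); rewrite -(qf_eval_transport _ _ f_inj AB).
exists (f' \o v); rewrite (qf_eval_transport _ _ f_inj AB).
by rewrite (@eq_qf_eval _ _ v) // => x /=; rewrite f'K.
Qed.

Fixpoint maxvar g : nat :=
  match g with
  | QTrue | QFalse => 0
  | QEq x y => maxn x y
  | QRel _ xs => \max_(x <- xs) x
  | QNot g => maxvar g
  | QAnd g h | QOr g h => maxn (maxvar g) (maxvar h)
  end.

Lemma qf_eval_agree_upto {A B s v g} :
  agree_upto s A B -> (forall x, x <= maxvar g -> v x <= s) ->
  qf_eval A v g = qf_eval B v g.
Proof.
move=> AB; elim: g => [||x y|r xs|g IHg|g IHg h IHh|g IHg h IHh] //= v_le.
- apply: AB; apply/allP => _ /mapP[x x_xs ->].
  by apply: v_le; apply: leq_bigmax_seq.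
- by rewrite IHg.
- by rewrite IHg ?IHh // => x x_le; apply: v_le; rewrite leq_max x_le ?orbT.
- by rewrite IHg ?IHh // => x x_le; apply: v_le; rewrite leq_max x_le ?orbT.
Qed.

Definition bigQAnd (gs : seq (qf sig)) : qf sig := foldr (@QAnd sig) (QTrue sig) gs.

Lemma qf_eval_bigQAnd A v gs : qf_eval A v (bigQAnd gs) = all (qf_eval A v) gs.
Proof. by elim: gs => //= g gs ->. Qed.

Lemma qf_eval_and A v g h : qf_eval A v (QAnd g h) = qf_eval A v g && qf_eval A v h.
Proof. by []. Qed.

Definition diag_literal A {s r} (t : (arity r).-tuple 'I_s.+1) : qf sig :=
  let tn := map_tuple val t in
  if A r tn then QRel tn else QNot (QRel tn).

(* The atomic diagram of A|_s, with the variable x standing for the element x. *)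
Definition diag A s : qf sig :=
  QAnd (bigQAnd [seq if x == y then QTrue sig else QNot (QEq sig x y)
                | x <- iota 0 s.+1, y <- iota 0 s.+1])
       (bigQAnd [seq diag_literal A t
                | r <- enum 'I_(size sig), t <- enum {: (arity r).-tuple 'I_s.+1}]).

Lemma diag_id A s : qf_eval A id (diag A s).
Proof.
rewrite /diag qf_eval_and !qf_eval_bigQAnd; apply/andP; split; apply/all_allpairsP.
  by move=> x y _ _; case: eqP => //= /eqP.
move=> r t _ _; rewrite /diag_literal; set tn := map_tuple _ t.
have tnE : map_tuple id tn = tn by apply: val_inj; rewrite /= map_id.
by case: ifP => /= [|/negbT]; rewrite tnE.
Qed.

Section DiagSound.
Context {A B : structure sig} {s : nat} {v : nat -> nat}.
Hypothesis Bv_diag : qf_eval B v (diag A s).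

Lemma diag_inj : {in gtn s.+1 &, injective v}.
Proof.
move=> x y; rewrite !inE !ltnS => xs ys vxy.
move: Bv_diag; rewrite qf_eval_and => /andP[+ _].
rewrite qf_eval_bigQAnd => /all_allpairsP/(_ x y).
rewrite !mem_iota !ltnS xs ys => /(_ isT isT).
by case: eqP => //= _; rewrite vxy eqxx.
Qed.

Lemma diag_agree {r} {t : (arity r).-tuple nat} :
  all (fun x => x <= s) t -> B r (map_tuple v t) = A r t.
Proof.
move=> t_le; pose t' := map_tuple (@inord s) t.
have t'E : map_tuple val t' = t.
  apply: val_inj; rewrite /= -map_comp -[RHS]map_id; apply/eq_in_map => x x_t /=.
  by rewrite inordK // ltnS; move/allP: t_le; apply.
move: Bv_diag; rewrite qf_eval_and => /andP[_].
rewrite qf_eval_bigQAnd => /all_allpairsP/(_ r t').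
rewrite !mem_enum /diag_literal t'E => /(_ isT isT).
by case: (A r t) => /= [|/negbTE].
Qed.

End DiagSound.

End QuantifierFree.

Arguments maxvar {sig}.

Lemma logn2_odd_mul_exp2 (s0 n : nat) : logn 2 (s0.*2.+1 * 2 ^ n) = n.
Proof. by rewrite logn_Gauss ?pfactorK // coprime2n /= odd_double. Qed.

Lemma leq_odd_mul_exp2 (s0 n : nat) : s0 <= s0.*2.+1 * 2 ^ n.
Proof.
apply: (@leq_trans s0.*2.+1); first by rewrite -addnn ltnW // ltnS leq_addr.
by rewrite leq_pmulr // expn_gt0.
Qed.

Section CoLearner.
Context {sig : seq nat} {I : countType} {K : I -> structure sig}.

Definition refuted_at s (S : structure sig) (j : I) :=
  exists g v, [/\ forall x, x <= maxvar g -> v x <= s, qf_eval S v g &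
                  forall w, ~~ qf_eval (K j) w g].

(* Stage s tests the candidate with code logn 2 s, so each candidate is
   tested at infinitely many, arbitrarily large, stages. *)
Definition co_learner s (S : structure sig) : option I :=
  if pickle_inv (logn 2 s) is Some j then
    if excluded_middle_informative (refuted_at s S j) then Some j else None
  else None.

Lemma refuted_at_agree_upto {s S S' j} :
  agree_upto s S S' -> refuted_at s S j -> refuted_at s S' j.
Proof.
move=> SS' [g [v [v_le Sv Kj]]]; exists g, v; split=> //.
by rewrite -(qf_eval_agree_upto SS' v_le).
Qed.

Lemma co_learner_learner : learner K co_learner.
Proof.
move=> s S S' _ _ SS'; rewrite /co_learner; case: pickle_inv => // j.
have S'S : agree_upto s S' S by move=> r t /SS' ->.
case: excluded_middle_informative => [R|nR];
  case: excluded_middle_informative => [R'|nR'] //.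
- by case: nR'; apply: refuted_at_agree_upto SS' R.
- by case: nR; apply: refuted_at_agree_upto S'S R'.
Qed.

Lemma co_learner_never_rejects {S i s} : iso S (K i) -> co_learner s S <> Some i.
Proof.
move=> SKi; rewrite /co_learner; case: pickle_inv => // j.
case: excluded_middle_informative => // [[g [v [_ Sv Kj]]]] [ji].
have [w Kiw] := (iso_qf_sat g SKi).1 (ex_intro _ v Sv).
by move: (Kj w); rewrite ji Kiw.
Qed.

Lemma co_learner_rejects {S i j phi} :
  iso S (K i) -> sat1 (K i) phi -> ~ sat1 (K j) phi ->
  exists s, co_learner s S = Some j.
Proof.
move=> SKi [k [v0 Kiv0]] nKj; set g := s1_disj phi k in Kiv0.
have [v Sv] := (iso_qf_sat g SKi).2 (ex_intro _ v0 Kiv0).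
pose s0 := \max_(x <- iota 0 (maxvar g).+1) v x.
exists (s0.*2.+1 * 2 ^ pickle j); rewrite /co_learner logn2_odd_mul_exp2 pickleK_inv.
case: excluded_middle_informative => // [[]]; exists g, v; split=> //.
  move=> x x_le; apply: leq_trans (leq_odd_mul_exp2 _ _).
  by apply: (@leq_bigmax_seq _ _ _ v); rewrite // mem_iota ltnS.
by move=> w; apply/negP => Kjw; apply: nKj; exists k, w.
Qed.

End CoLearner.

Arguments co_learner {sig I} K s S.

Lemma sigma1_antichain_co_learnable (sig : seq nat) (I : countType)
    (K : I -> structure sig) :
  sigma1_antichain K -> co_learnable K.
Proof.
move=> antichain; exists (co_learner K); split; first exact: co_learner_learner.
move=> S i SKi j; split=> [[s]|ji].
  by move=> + ji; rewrite ji; apply: co_learner_never_rejects SKi.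
have [phi [_ [Kiphi nKjphi _ _]]] := antichain i j (nesym ji).
exact: co_learner_rejects SKi Kiphi nKjphi.
Qed.

Lemma co_learnable_separates {sig : seq nat} {I : Type} {K : I -> structure sig}
    {i j : I} :
  co_learnable K -> i <> j -> exists phi, sat1 (K i) phi /\ ~ sat1 (K j) phi.
Proof.
move=> [M [M_learner M_co]] ij.
have [s Ms] : exists s, M s (K i) = Some j.
  by apply/(M_co _ _ (iso_refl _)); apply: nesym.
exists (Sigma1 (fun=> diag (K i) s)); split; first by exists 0, id; apply: diag_id.
move=> [k [v Kjv]] /=.
have [f f_bij fE] := bij_extend_inj_on (diag_inj Kjv).
pose S : structure sig := fun r t => K j r (map_tuple f t).
have SKj : iso S (K j) by exists f.
have SKi : agree_upto s S (K i).
  move=> r t t_le; rewrite /S -(diag_agree Kjv t_le); congr (K j r).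
  by apply: eq_in_map_tuple => x x_t; rewrite fE // inE ltnS; move/allP: t_le; apply.
have MS : M s S = M s (K i).
  by apply: M_learner => //; [exists j | exists i; apply: iso_refl].
have MSj : exists s, M s S = Some j by exists s; rewrite MS.
by case: ((M_co _ _ SKj j).1 MSj).
Qed.

Theorem mainTheorem4 (sig : seq nat) (I : countType) (K : I -> structure sig) :
  pairwise_noniso K ->
  (co_learnable K <-> sigma1_antichain K).
Proof.
move=> _; split=> [co i j ij|]; last exact: sigma1_antichain_co_learnable.
have [phi [Kiphi nKjphi]] := co_learnable_separates co ij.
have [psi [Kjpsi nKipsi]] := co_learnable_separates co (nesym ij).
by exists phi, psi.
Qed.
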